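(* Let $(u^\ast,W^\ast)$ be the minimizer of $f(u,W)$ (so that $u_i^\ast=\log(1+\sum_{k\ne y_i}e^{x_i^\top(w_k^\ast-w_{y_i}^\ast)})$). Then for every $i$, $u_i^\ast\le B_u$, where $B_u=\log(1+(K-1)e^{2B_xB_W})$, $B_x=\max_i\|x_i\|_2$ and $B_W^2=\frac{2}{\mu}N\log K$.
   Context: Data: $(y_i,x_i)$, $i=1,\dots,N$, $x_i\in\mathbb{R}^D$, $y_i\in\{1,\dots,K\}$, $K\ge 2$; $\mu>0$; $u\in\mathbb{R}^N$, $W=[w_1,\dots,w_K]\in\mathbb{R}^{D\times K}$ with Frobenius norm $\|W\|_2$; $$f(u,W)=\sum_{i=1}^N\Big[u_i+e^{-u_i}+\sum_{k\ne y_i}e^{x_i^\top(w_k-w_{y_i})-u_i}\Big]+\tfrac{\mu}{2}\|W\|_2^2.$$ *)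

From HB Require Import structures.
From mathcomp Require Import all_boot all_order all_algebra.
From mathcomp Require Import all_classical all_reals all_analysis.
Set Implicit Arguments. Unset Strict Implicit. Unset Printing Implicit Defensive.
Import Order.TTheory GRing.Theory Num.Theory.
Local Open Scope ring_scope.

(* Data: x : 'I_N -> 'rV[R]_D (feature vectors x_i), y : 'I_N -> 'I_K (labels),
   W : 'M[R]_(D, K) whose k-th column is w_k, u : 'I_N -> R. *)

Definition xdiff {R : realType} {D K : nat} (xi : 'rV[R]_D) (W : 'M[R]_(D, K))
  (k l : 'I_K) : R :=
  \sum_(d < D) xi 0 d * (W d k - W d l).

Definition vnorm {R : realType} {D : nat} (v : 'rV[R]_D) : R :=
  Num.sqrt (\sum_(d < D) v 0 d ^+ 2).

Definition frob {R : realType} {D K : nat} (W : 'M[R]_(D, K)) : R :=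
  Num.sqrt (\sum_(d < D) \sum_(k < K) W d k ^+ 2).

Definition fobj {R : realType} {N D K : nat} (mu : R)
  (x : 'I_N -> 'rV[R]_D) (y : 'I_N -> 'I_K)
  (u : 'I_N -> R) (W : 'M[R]_(D, K)) : R :=
  \sum_(i < N) (u i + expR (- u i)
                + \sum_(k < K | k != y i) expR (xdiff (x i) W k (y i) - u i))
  + mu / 2 * frob W ^+ 2.

Definition Bx {R : realType} {N D : nat} (x : 'I_N -> 'rV[R]_D) : R :=
  \big[Num.max/0]_(i < N) vnorm (x i).

Definition BW {R : realType} (N K : nat) (mu : R) : R :=
  Num.sqrt (2 / mu * N%:R * ln K%:R).

Definition Bu {R : realType} {N D : nat} (K : nat) (mu : R)
  (x : 'I_N -> 'rV[R]_D) : R :=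
  ln (1 + (K%:R - 1) * expR (2 * Bx x * BW N K mu)).

(* Write S_i(W) = sum_{k <> y_i} e^{x_i^T (w_k - w_{y_i})}.  The objective is
   sum_i (u_i + e^{-u_i} (1 + S_i(W))) + (mu/2) ||W||^2, and the one-variable loss
   u + e^{-u} (1 + S) has the unique minimizer log (1 + S), with minimum value
   log (1 + S) + 1 >= 1.  At the minimizer (u, W) this gives u_i = log (1 + S_i(W)), and
   comparing with f(log K, 0) = N (log K + 1) gives (mu/2) ||W||^2 <= N log K, i.e.
   ||W|| <= B_W.  By Cauchy-Schwarz every exponent in S_i(W) is at most 2 B_x B_W. *)
From mathcomp Require Import all_boot all_order all_algebra.
From mathcomp Require Import all_classical all_reals all_analysis.
From mathcomp Require Import lra ring.
Set Implicit Arguments. Unset Strict Implicit. Unset Printing Implicit Defensive.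
Import Order.TTheory GRing.Theory Num.Theory.
Local Open Scope ring_scope.

Lemma CauchySchwarz_sum (R : realDomainType) (I : finType) (a b : I -> R) :
  (\sum_i a i * b i) ^+ 2 <= (\sum_i a i ^+ 2) * (\sum_i b i ^+ 2).
Proof.
have sq_ge0 : 0 <= \sum_i \sum_j (a i * b j - a j * b i) ^+ 2.
  by do 2!apply: sumr_ge0 => ? _; exact: sqr_ge0.
have lagrange : \sum_i \sum_j (a i * b j - a j * b i) ^+ 2 =
    \sum_i \sum_j (a i ^+ 2 * b j ^+ 2) + \sum_i \sum_j (b i ^+ 2 * a j ^+ 2)
    - 2 * \sum_i \sum_j ((a i * b i) * (a j * b j)).
  rewrite -big_split mulr_sumr -sumrB /=; apply: eq_bigr => i _.
  by rewrite -big_split mulr_sumr -sumrB /=; apply: eq_bigr => j _; ring.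
move: sq_ge0; rewrite lagrange -!big_distrlr /=.
set A := \sum_i a i ^+ 2; set B := \sum_i b i ^+ 2; set p := \sum_i a i * b i.
have -> : A * B + B * A - 2 * (p * p) = 2 * (A * B - p ^+ 2) by ring.
by rewrite pmulr_rge0 // subr_ge0.
Qed.

Lemma CauchySchwarz_sum_sqrt (R : rcfType) (I : finType) (a b : I -> R) :
  `|\sum_i a i * b i| <= Num.sqrt (\sum_i a i ^+ 2) * Num.sqrt (\sum_i b i ^+ 2).
Proof.
rewrite -sqrtrM; last by apply: sumr_ge0 => i _; exact: sqr_ge0.
rewrite -sqrtr_sqr ler_sqrt ?CauchySchwarz_sum //.
by apply: mulr_ge0; apply: sumr_ge0 => i _; exact: sqr_ge0.
Qed.

Section Loss.
Variable R : realType.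

Definition loss (u s : R) := u + expR (- u) * (1 + s).

Lemma lossE (u s : R) : 0 <= s -> loss u s = u + expR (ln (1 + s) - u).
Proof. by move=> s_ge0; rewrite /loss expRD lnK ?posrE 1?mulrC //; lra. Qed.

Lemma loss_ln (s : R) : 0 <= s -> loss (ln (1 + s)) s = ln (1 + s) + 1.
Proof. by move=> s_ge0; rewrite lossE // subrr expR0. Qed.

Lemma loss_ge (u s : R) : 0 <= s -> ln (1 + s) + 1 <= loss u s.
Proof. by move=> s_ge0; rewrite lossE //; have := expR_ge1Dx (ln (1 + s) - u); lra. Qed.

Lemma loss_le_min_eq (u s : R) :
  0 <= s -> loss u s <= ln (1 + s) + 1 -> u = ln (1 + s).
Proof.
move=> s_ge0; rewrite lossE // => le_loss; apply/eqP; apply: contraLR le_loss => neq_u.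
have /expR_gt1Dx : ln (1 + s) - u != 0 by rewrite subr_eq0 eq_sym.
by rewrite -ltNge; lra.
Qed.

End Loss.

Section Objective.
Variables (R : realType) (N D K : nat) (mu : R).
Variables (x : 'I_N -> 'rV[R]_D) (y : 'I_N -> 'I_K).

Definition expsum (W : 'M[R]_(D, K)) (i : 'I_N) : R :=
  \sum_(k < K | k != y i) expR (xdiff (x i) W k (y i)).

Lemma expsum_ge0 W i : 0 <= expsum W i.
Proof. by apply: sumr_ge0 => k _; exact: expR_ge0. Qed.

Lemma fobjE u W :
  fobj mu x y u W = \sum_i loss (u i) (expsum W i) + mu / 2 * frob W ^+ 2.
Proof.
rewrite /fobj; congr (_ + _); apply: eq_bigr => i _.
rewrite /loss mulrDr mulr1 addrA mulr_sumr; congr (_ + _).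
by apply: eq_bigr => k _; rewrite expRD mulrC.
Qed.

Lemma fobj_ge u W : N%:R + mu / 2 * frob W ^+ 2 <= fobj mu x y u W.
Proof.
rewrite fobjE lerD2r -[N in N%:R]card_ord -sumr_const ler_sum // => i _.
apply: le_trans (loss_ge _ (expsum_ge0 W i)); rewrite lerDr ln_ge0 //.
by rewrite lerDl expsum_ge0.
Qed.

Lemma fobj_le_update u W i v :
  fobj mu x y u W <= fobj mu x y (fun j => if j == i then v else u j) W ->
  loss (u i) (expsum W i) <= loss v (expsum W i).
Proof.
set u' := fun j => _.
rewrite !fobjE (bigD1 i) //= [X in _ <= X + _](bigD1 i) //= {1}/u' eqxx lerD2r.
suff -> : \sum_(j | j != i) loss (u' j) (expsum W j) =
          \sum_(j | j != i) loss (u j) (expsum W j) by rewrite lerD2r.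
by apply: eq_bigr => j /negbTE neq_ji; rewrite /u' neq_ji.
Qed.

Lemma sumr_const_neq (j : 'I_K) (c : R) : \sum_(k < K | k != j) c = (K%:R - 1) * c.
Proof.
have total : \sum_(k < K) c = c + \sum_(k < K | k != j) c by rewrite (bigD1 j).
apply: (addrI c).
by rewrite -total sumr_const card_ord mulrBl mul1r mulr_natl addrC subrK.
Qed.

Lemma expsum0 i : expsum 0 i = K%:R - 1.
Proof.
rewrite /expsum (eq_bigr (fun=> 1)) ?sumr_const_neq ?mulr1 // => k _.
by rewrite /xdiff big1 ?expR0 // => d _; rewrite !mxE subrr mulr0.
Qed.

Lemma frob0 : frob (0 : 'M[R]_(D, K)) = 0.
Proof.
by rewrite /frob big1 ?sqrtr0 // => d _; rewrite big1 // => k _; rewrite mxE expr0n.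
Qed.

Lemma fobj_lnK_0 : fobj mu x y (fun=> ln K%:R) 0 = N%:R * (ln K%:R + 1).
Proof.
rewrite fobjE frob0 expr0n mulr0 addr0.
rewrite (eq_bigr (fun=> ln K%:R + 1)) ?sumr_const ?card_ord ?mulr_natl // => i _.
rewrite expsum0.
have K_ge1 : 1 <= K%:R :> R by rewrite ler1n (leq_ltn_trans (leq0n _) (ltn_ord (y i))).
set s := K%:R - 1; have -> : K%:R = 1 + s :> R by rewrite /s addrC subrK.
by apply: loss_ln; rewrite /s subr_ge0.
Qed.

Lemma col_norm_le_frob (W : 'M[R]_(D, K)) k :
  Num.sqrt (\sum_d W d k ^+ 2) <= frob W.
Proof.
rewrite /frob ler_sqrt; last by do 2!apply: sumr_ge0 => ? _; exact: sqr_ge0.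
apply: ler_sum => d _; rewrite (bigD1 k) //= lerDl.
by apply: sumr_ge0 => l _; exact: sqr_ge0.
Qed.

Lemma xdiff_le_norm (xi : 'rV[R]_D) (W : 'M[R]_(D, K)) k l :
  xdiff xi W k l <= 2 * vnorm xi * frob W.
Proof.
have dot_col m : `|\sum_d xi 0 d * W d m| <= vnorm xi * frob W.
  apply: le_trans (CauchySchwarz_sum_sqrt _ _) _.
  by apply: ler_wpM2l; [exact: sqrtr_ge0 | exact: col_norm_le_frob].
have -> : xdiff xi W k l = \sum_d xi 0 d * W d k - \sum_d xi 0 d * W d l.
  by rewrite /xdiff -sumrB; apply: eq_bigr => d _; rewrite mulrBr.
rewrite -mulrA mulr_natl mulr2n.
by apply: le_trans (ler_norm _) _; apply: le_trans (ler_normB _ _) _; exact: lerD.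
Qed.

Lemma expsum_le W i : expsum W i <= (K%:R - 1) * expR (2 * vnorm (x i) * frob W).
Proof.
rewrite /expsum -(sumr_const_neq (y i)); apply: ler_sum => k _.
by rewrite ler_expR xdiff_le_norm.
Qed.

Lemma vnorm_le_Bx i : vnorm (x i) <= Bx x.
Proof. exact: (le_bigmax 0 (fun j => vnorm (x j)) i). Qed.

Lemma frob_le_BW (W : 'M[R]_(D, K)) :
  0 < mu -> mu / 2 * frob W ^+ 2 <= N%:R * ln K%:R -> frob W <= BW N K mu.
Proof.
move=> mu_gt0 le_frob.
have bound_ge0 : 0 <= N%:R * ln K%:R :> R.
  by rewrite (le_trans _ le_frob) // mulr_ge0 ?sqr_ge0 ?divr_ge0 ?ltW.
rewrite /BW.
have -> : 2 / mu * N%:R * ln K%:R = N%:R * ln K%:R / (mu / 2).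
  by field; rewrite gt_eqF.
rewrite -(ger0_norm (sqrtr_ge0 _ : 0 <= frob W)) -sqrtr_sqr ler_sqrt.
  by rewrite ler_pdivlMr ?divr_gt0 // mulrC.
by apply: divr_ge0 => //; apply: divr_ge0 => //; exact: ltW.
Qed.

End Objective.

Theorem lemma2 (R : realType) (N D K : nat) (hK : (2 <= K)%N) (mu : R)
  (hmu : 0 < mu) (x : 'I_N -> 'rV[R]_D) (y : 'I_N -> 'I_K)
  (ustar : 'I_N -> R) (Wstar : 'M[R]_(D, K))
  (hmin : forall (u : 'I_N -> R) (W : 'M[R]_(D, K)),
      fobj mu x y ustar Wstar <= fobj mu x y u W) :
  forall i : 'I_N, ustar i <= Bu K mu x.
Proof.
move=> i.
have K_ge1 : 1 <= K%:R :> R by rewrite ler1n ltnW.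
have ustarE : ustar i = ln (1 + expsum x y Wstar i).
  apply: loss_le_min_eq (expsum_ge0 _ _ _ _) _.
  by rewrite -loss_ln ?expsum_ge0 //; apply: fobj_le_update; exact: hmin.
have frob_le : frob Wstar <= BW N K mu.
  apply: frob_le_BW => //; have := hmin (fun=> ln K%:R) 0.
  rewrite fobj_lnK_0 mulrDr mulr1; have := fobj_ge mu x y ustar Wstar; lra.
have expsum_ge0i := expsum_ge0 x y Wstar i.
have bound_ge0 : 0 <= (K%:R - 1) * expR (2 * Bx x * BW N K mu).
  by rewrite mulr_ge0 ?expR_ge0 ?subr_ge0.
rewrite ustarE /Bu ler_ln ?posrE; [| lra | lra].
rewrite lerD2l; apply: le_trans (expsum_le _ _ _ _) _.
rewrite ler_wpM2l ?subr_ge0 // ler_expR ler_pM ?mulr_ge0 ?sqrtr_ge0 //.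
by rewrite ler_wpM2l ?vnorm_le_Bx.
Qed.
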